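(* The set of points of exact period $2$ under $G$ lies on the line $u=-1$, and the Zariski closure in $\mathbb{C}^2$ of this set is the line $u=-1$ (the equation of period two orbits on the $(u,v)$-plane is $u=-1$).
   Context: Let \[ G(u,v)=\left(\frac{-u+v+uv}{u},\ \frac{u^{2}-u+v-u^{2}v-uv+uv^{2}+v^{2}}{u}\right), \] defined for $(u,v)\in\mathbb{C}^2$ with $u\neq 0$. A point $(u,v)$ has exact period $n$ under $G$ if the iterates $G^k(u,v)$, $0\le k\le n-1$, all have nonzero first coordinate, $G^n(u,v)=(u,v)$, and $G^k(u,v)\neq(u,v)$ for $0<k<n$. *)

From mathcomp Require Import all_boot all_algebra.
From mathcomp.real_closed Require Import complex.
From mathcomp Require Import Rstruct.
Set Implicit Arguments. Unset Strict Implicit. Unset Printing Implicit Defensive.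
Import GRing.Theory Num.Theory.
Local Open Scope ring_scope.

Notation CC := (complex Rdefinitions.R).

(* The map G on C^2 (as a total function; only used where u <> 0). *)
Definition G (p : CC * CC) : CC * CC :=
  let u := p.1 in let v := p.2 in
  ((- u + v + u * v) / u,
   (u ^+ 2 - u + v - u ^+ 2 * v - u * v + u * v ^+ 2 + v ^+ 2) / u).

Definition exact_period (n : nat) (p : CC * CC) : Prop :=
  (forall k, (k < n)%N -> (iter k G p).1 != 0) /\
  iter n G p = p /\
  (forall k, (0 < k < n)%N -> iter k G p <> p).

(* Evaluation of a bivariate polynomial P(X,Y) in {poly {poly CC}}
   (outer variable Y, coefficients polynomials in X) at (u,v). *)
Definition eval2 (P : {poly {poly CC}}) (u v : CC) : CC := (P.[v%:P]).[u].

Definition zariski_closure (S : CC * CC -> Prop) (p : CC * CC) : Prop :=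
  forall P : {poly {poly CC}},
    (forall q, S q -> eval2 P q.1 q.2 = 0) -> eval2 P p.1 p.2 = 0.

(** Clearing the denominators of [G (u,v) = (w,z)] and [G (w,z) = (u,v)] and
    eliminating [v] and [z] leaves [u w (u - w) (u w + 2u + 1) = 0] together
    with the same relation with [u] and [w] exchanged.  For [u <> w] the two
    quadratic factors differ by [2 (u - w)], which is impossible; for [u = w]
    the first equation reads [(v - u)(u + 1) = 0], so a genuine 2-cycle
    forces [u = -1].  Conversely [G] restricts to the involution
    [y |-> -2 - y] of the line [u = -1], whose only fixed point is [y = -1];
    a polynomial vanishing on the rest of the line vanishes on all of it. *)
From mathcomp Require Import all_boot all_algebra.
From mathcomp.real_closed Require Import complex.
From mathcomp Require Import Rstruct.
From mathcomp Require Import ring.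
Set Implicit Arguments. Unset Strict Implicit. Unset Printing Implicit Defensive.
Import GRing.Theory Num.Theory.
Local Open Scope ring_scope.

Section TwoCycleEquations.

Variable R : comNzRingType.
Implicit Types u v w z : R.

Definition Gnum1 u v := - u + v + u * v.

Definition Gnum2 u v :=
  u ^+ 2 - u + v - u ^+ 2 * v - u * v + u * v ^+ 2 + v ^+ 2.

Lemma Gnum_two_cycle_relation u v w z :
  u * w = Gnum1 u v -> u * z = Gnum2 u v -> w * u = Gnum1 w z ->
  u * w * (u - w) * (u * w + 2 * u + 1) = 0.
Proof.
move=> eq_w eq_z eq_u.
(* The first and third equations give v (u + 1) = u (w + 1) and
   z (w + 1) = w (u + 1); after eliminating v and z, the factor (u + 1) (w + 1)
   clears the remaining denominators of the second equation. *)
have -> : u * w * (u - w) * (u * w + 2 * u + 1) =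
    (u + 1) * (w + 1) * (u * z - Gnum2 u v)
    - u * (u + 1) * (Gnum1 w z - w * u)
    + (w + 1) * (Gnum1 u v - u * w)
      * (1 - u - u ^+ 2 + 2 * u * (w + 1) + (Gnum1 u v - u * w)).
  by rewrite /Gnum1 /Gnum2; ring.
by rewrite eq_z -eq_w -eq_u !subrr !(mulr0, mul0r, subr0, addr0).
Qed.

End TwoCycleEquations.

Lemma Gnum_two_cycle_line (R : idomainType) (u v w z : R) :
  (2 : R) != 0 -> u != 0 -> w != 0 ->
  u * w = Gnum1 u v -> u * z = Gnum2 u v ->
  w * u = Gnum1 w z -> w * v = Gnum2 w z ->
  (w, z) <> (u, v) -> u = -1.
Proof.
move=> two_neq0 u_neq0 w_neq0 eq_w eq_z eq_u eq_v cycle.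
have [eq_wu | neq_wu] := eqVneq w u.
  subst w.
  have fixed_line (x : R) : u * u = Gnum1 u x -> (x - u) * (u + 1) = 0.
    move=> eq_x; have -> : (x - u) * (u + 1) = Gnum1 u x - u * u.
      by rewrite /Gnum1; ring.
    by rewrite eq_x subrr.
  have [/eqP | u1_neq0] := eqVneq (u + 1) 0; first by rewrite addr_eq0 => /eqP.
  have on_diag x : u * u = Gnum1 u x -> x = u.
    by move/fixed_line/eqP; rewrite mulf_eq0 (negPf u1_neq0) orbF subr_eq0 => /eqP.
  by case: cycle; rewrite (on_diag z eq_u) (on_diag v eq_w).
have factor_eq0 (x y : R) : x != 0 -> y != 0 -> x != y ->
    x * y * (x - y) * (x * y + 2 * x + 1) = 0 -> x * y + 2 * x + 1 = 0.
  move=> x_neq0 y_neq0 neq_xy /eqP.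
  by rewrite !mulf_eq0 (negPf x_neq0) (negPf y_neq0) subr_eq0 (negPf neq_xy) => /eqP.
have neq_uw : u != w by rewrite eq_sym.
have rel_u := factor_eq0 _ _ u_neq0 w_neq0 neq_uw
  (Gnum_two_cycle_relation eq_w eq_z eq_u).
have rel_w := factor_eq0 _ _ w_neq0 u_neq0 neq_wu
  (Gnum_two_cycle_relation eq_u eq_v eq_w).
have /eqP : 2 * (u - w) = 0.
  have -> : 2 * (u - w) = (u * w + 2 * u + 1) - (w * u + 2 * w + 1) by ring.
  by rewrite rel_u rel_w subrr.
by rewrite mulf_eq0 (negPf two_neq0) subr_eq0 (negPf neq_uw).
Qed.

Lemma G_pairE (u v : CC) : G (u, v) = (Gnum1 u v / u, Gnum2 u v / u).
Proof. by []. Qed.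

Lemma G_eq_cleared (u v w z : CC) : u != 0 -> G (u, v) = (w, z) ->
  u * w = Gnum1 u v /\ u * z = Gnum2 u v.
Proof. by move=> u_neq0; rewrite G_pairE => -[<- <-]; rewrite !(mulrC u) !divfK. Qed.

Lemma exact_period2_fst (p : CC * CC) : exact_period 2 p -> p.1 = -1.
Proof.
case: p => u v [orbit_neq0 [back not_fixed]] /=.
have u_neq0 : u != 0 := orbit_neq0 0%N isT.
case eq_G: (G (u, v)) => [w z].
have w_neq0 : w != 0.
  by have : (G (u, v)).1 != 0 := orbit_neq0 1%N isT; rewrite eq_G.
have [eq_w eq_z] := G_eq_cleared u_neq0 eq_G.
have [eq_u eq_v] : w * u = Gnum1 w z /\ w * v = Gnum2 w z.
  by apply: G_eq_cleared; rewrite // -eq_G; exact: back.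
apply: (Gnum_two_cycle_line _ u_neq0 w_neq0 eq_w eq_z eq_u eq_v).
  by rewrite pnatr_eq0.
by rewrite -eq_G; exact: (not_fixed 1%N).
Qed.

Lemma G_line (y : CC) : G (-1, y) = (-1, -2 - y).
Proof. by rewrite G_pairE invrN1; congr pair; rewrite /Gnum1 /Gnum2; ring. Qed.

Lemma iter_G_line (n : nat) (y : CC) :
  iter n G (-1, y) = (-1, if odd n then -2 - y else y).
Proof.
elim: n => [|n IH] //; rewrite iterS IH G_line /=.
by case: (odd n) => //=; congr pair; ring.
Qed.

Lemma exact_period2_line (y : CC) : y != -1 -> exact_period 2 (-1, y).
Proof.
move=> y_neq; split; [|split].
- by move=> k _; rewrite iter_G_line oppr_eq0 oner_neq0.
- by rewrite iter_G_line.
- case=> [|[|k]] // _; rewrite iter_G_line /= => -[eq_y].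
  case/eqP: y_neq; have /eqP : 2 * (y + 1) = 0.
    have -> : 2 * (y + 1) = y - (-2 - y) by ring.
    by rewrite eq_y subrr.
  by rewrite mulf_eq0 pnatr_eq0 /= addr_eq0 => /eqP.
Qed.

Lemma poly_eq0_off_point (R : numDomainType) (Q : {poly R}) (a : R) :
  (forall y, y != a -> Q.[y] = 0) -> Q = 0.
Proof.
move=> Q0; pose rs := [seq a + i.+1%:R | i <- iota 0 (size Q)].
apply: (@roots_geq_poly_eq0 _ _ rs).
- apply/allP => _ /mapP [i _ ->]; apply/rootP/Q0.
  by rewrite -subr_eq0 addrC addKr pnatr_eq0.
- by rewrite map_inj_uniq ?iota_uniq // => i j /addrI /eqP; rewrite eqr_nat => /eqP [].
- by rewrite size_map size_iota.
Qed.

Lemma eval2_map_poly (P : {poly {poly CC}}) (x y : CC) :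
  eval2 P x y = (map_poly (horner_eval x) P).[y].
Proof.
by have := horner_map (horner_eval x) P y%:P; rewrite /= !horner_evalE hornerC.
Qed.

Theorem mainTheorem4 :
  (forall p : CC * CC, exact_period 2 p -> p.1 = -1) /\
  (forall p : CC * CC, zariski_closure (exact_period 2) p <-> p.1 = -1).
Proof.
split=> [|[u v]]; first exact: exact_period2_fst.
split=> /= [in_closure | ->].
  have eval_line (x y : CC) : eval2 ('X + 1)%:P x y = x + 1.
    by rewrite /eval2 hornerC !hornerE.
  apply/eqP; rewrite -addr_eq0 -(eval_line u v); apply/eqP/in_closure.
  by move=> q /exact_period2_fst; rewrite eval_line => ->; exact: addNr.
move=> P vanish; rewrite eval2_map_poly.
suff -> : map_poly (horner_eval (-1)) P = 0 by rewrite horner0.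
apply: (poly_eq0_off_point (a := -1)) => y y_neq; rewrite -eval2_map_poly.
exact: (vanish (-1, y) (exact_period2_line y_neq)).
Qed.
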